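(* Let $\Lambda$ be an admissible temporal logic over a temporal language $\mathcal L$. Then the canonical model $\mathfrak M_c=(W_c,\preccurlyeq_c,S_c,\ell_c)$ of $\Lambda$ is a deterministic weak quasimodel; that is: $\preccurlyeq_c$ is a partial order on $W_c$; each $\ell_c(\Phi)$ satisfies the type conditions (1)–(9); $\Phi\preccurlyeq_c\Psi$ implies $\ell_c(\Phi)\preccurlyeq_T\ell_c(\Psi)$; for every $\Phi\in W_c$ and every $\varphi\to\psi\in\Phi^-$ there is $\Psi\in W_c$ with $\Phi\preccurlyeq_c\Psi$, $\varphi\in\Psi^+$ and $\psi\in\Psi^-$; and $S_c$ is a monotone function $W_c\to W_c$ such that every pair $(\Phi,S_c(\Phi))$ is sensible.
   Context: Formulas are built from $\bot$ and propositional variables using $\wedge,\vee,\to$ and modalities $\circ,\Diamond,\Box,\forall$. A temporal language $\mathcal L_M$ ($M\subseteq\{\Diamond,\Box,\forall\}$) uses $\bot$, variables, $\wedge,\vee,\to,\circ$ and only modalities in $M$. ${\sf ITL}^0_M$ is the logic over $\mathcal L_M$ axiomatized by intuitionistic propositional logic, (N1) $\neg\circ\bot$, (N2) $\circ\varphi\wedge\circ\psi\to\circ(\varphi\wedge\psi)$, (N3) $\circ(\varphi\vee\psi)\to\circ\varphi\vee\circ\psi$, (N4) $\circ(\varphi\to\psi)\to(\circ\varphi\to\circ\psi)$, rules modus ponens and from $\varphi$ infer $\circ\varphi$; plus, if $\Diamond\in M$, axiom $\varphi\vee\circ\Diamond\varphi\to\Diamond\varphi$ and rules from $\varphi\to\psi$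 infer $\Diamond\varphi\to\Diamond\psi$, from $\circ\varphi\to\varphi$ infer $\Diamond\varphi\to\varphi$; plus, if $\forall\in M$, axioms $\forall\varphi\vee\neg\forall\varphi$, $\forall(\varphi\to\psi)\to(\forall\varphi\to\forall\psi)$, $\forall(\varphi\vee\forall\psi)\to\forall\varphi\vee\forall\psi$, $\forall\varphi\to\varphi$, $\forall\varphi\to\forall\forall\varphi$, $\forall\varphi\leftrightarrow\circ\forall\varphi$ and rule from $\varphi$ infer $\forall\varphi$. An admissible temporal logic over $\mathcal L_M$ is a set of $\mathcal L_M$-formulas containing all substitution instances of the axioms of ${\sf ITL}^0_M$ and closed under its rules. $\Gamma\vdash\Delta$ means there are finite $\Gamma'\subseteq\Gamma$, $\Delta'\subseteq\Delta$ with $\bigwedge\Gamma'\to\bigvee\Delta'\in\Lambda$. A prime $\mathcal L$-type is a pair $\Phi=(\Phi^+,\Phi^-)$ of sets of $\mathcal L$-formulas with $\Phi^+\cup\Phi^-=\mathcal L$ and $\Phi^+\not\vdash\Phi^-$. For pairs, $\Phi\preccurlyeq_T\Psi$ means $\Phi^+\subseteq\Psi^+$ and $\Psi^-\subseteq\Phi^-$. Type conditions: (1) $\Phi^-\cap\Phi^+=\varnothing$; (2) $\bot\notin\Phi^+$; (3) $\varphi\wedge\psi\in\Phi^+\Rightarrow\varphi,\psi\in\Phi^+$; (4) $\varphi\wedge\psi\in\Phi^-\Rightarrow\varphi\in\Phi^-$ or $\psi\in\Phi^-$; (5) $\varphi\vee\psi\in\Phi^+\Rightarrow\varphi\in\Phi^+$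 or $\psi\in\Phi^+$; (6) $\varphi\vee\psi\in\Phi^-\Rightarrow\varphi,\psi\in\Phi^-$; (7) $\varphi\to\psi\in\Phi^+\Rightarrow\varphi\in\Phi^-$ or $\psi\in\Phi^+$; (8) $\varphi\to\psi\in\Phi^-\Rightarrow\psi\in\Phi^-$; (9) $\Diamond\varphi\in\Phi^-\Rightarrow\varphi\in\Phi^-$. A pair $(\Phi,\Psi)$ is sensible if: $\circ\varphi\in\Phi^+\Rightarrow\varphi\in\Psi^+$; $\circ\varphi\in\Phi^-\Rightarrow\varphi\in\Psi^-$; $\Diamond\varphi\in\Phi^+\Rightarrow\varphi\in\Phi^+$ or $\Diamond\varphi\in\Psi^+$; $\Diamond\varphi\in\Phi^-\Rightarrow\Diamond\varphi\in\Psi^-$; $\forall\varphi\in\Phi^+\Leftrightarrow\forall\varphi\in\Psi^+$; $\forall\varphi\in\Phi^-\Leftrightarrow\forall\varphi\in\Psi^-$. The canonical model: $W_c$ is the set of prime $\mathcal L$-types, $\preccurlyeq_c$ is $\preccurlyeq_T$ restricted to $W_c$, $\Phi\mathrel{S_c}\Psi$ iff $(\Phi,\Psi)$ is sensible, and $\ell_c$ is the identity. *)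

From Stdlib Require Import List.
Import ListNotations.

Inductive form : Type :=
| Bot : form
| Var : nat -> form
| And : form -> form -> form
| Or  : form -> form -> form
| Imp : form -> form -> form
| Next : form -> form
| Dia : form -> form
| Box : form -> form
| All : form -> form.

Definition Neg (f : form) : form := Imp f Bot.
Definition Top : form := Imp Bot Bot.
Definition Iff (f g : form) : form := And (Imp f g) (Imp g f).

Inductive modality : Type := MDia | MBox | MAll.

Fixpoint inL (M : modality -> bool) (f : form) : Prop :=
  match f with
  | Bot => True
  | Var _ => True
  | And a b | Or a b | Imp a b => inL M a /\ inL M b
  | Next a => inL M a
  | Dia a => M MDia = true /\ inL M a
  | Box a => M MBox = true /\ inL M a
  | All a => M MAll = true /\ inL M a
  end.

Definition ipc_axiom (a b c : form) (t : form) : Prop :=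
  t = Imp a (Imp b a) \/
  t = Imp (Imp a (Imp b c)) (Imp (Imp a b) (Imp a c)) \/
  t = Imp (And a b) a \/
  t = Imp (And a b) b \/
  t = Imp a (Imp b (And a b)) \/
  t = Imp a (Or a b) \/
  t = Imp b (Or a b) \/
  t = Imp (Imp a c) (Imp (Imp b c) (Imp (Or a b) c)) \/
  t = Imp Bot a.

Definition next_axiom (a b : form) (t : form) : Prop :=
  t = Neg (Next Bot) \/
  t = Imp (And (Next a) (Next b)) (Next (And a b)) \/
  t = Imp (Next (Or a b)) (Or (Next a) (Next b)) \/
  t = Imp (Next (Imp a b)) (Imp (Next a) (Next b)).

Definition dia_axiom (a : form) (t : form) : Prop :=
  t = Imp (Or a (Next (Dia a))) (Dia a).

Definition all_axiom (a b : form) (t : form) : Prop :=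
  t = Or (All a) (Neg (All a)) \/
  t = Imp (All (Imp a b)) (Imp (All a) (All b)) \/
  t = Imp (All (Or a (All b))) (Or (All a) (All b)) \/
  t = Imp (All a) a \/
  t = Imp (All a) (All (All a)) \/
  t = Iff (All a) (Next (All a)).

Definition itl0_axiom (M : modality -> bool) (t : form) : Prop :=
  exists a b c, inL M a /\ inL M b /\ inL M c /\
    (ipc_axiom a b c t \/ next_axiom a b t \/
     (M MDia = true /\ dia_axiom a t) \/
     (M MAll = true /\ all_axiom a b t)).

Definition admissible (M : modality -> bool) (Lam : form -> Prop) : Prop :=
  (forall f, Lam f -> inL M f) /\
  (forall t, itl0_axiom M t -> Lam t) /\
  (forall a b, Lam a -> Lam (Imp a b) -> Lam b) /\
  (forall a, Lam a -> Lam (Next a)) /\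
  (M MDia = true ->
     (forall a b, Lam (Imp a b) -> Lam (Imp (Dia a) (Dia b))) /\
     (forall a, Lam (Imp (Next a) a) -> Lam (Imp (Dia a) a))) /\
  (M MAll = true -> forall a, Lam a -> Lam (All a)).

Fixpoint bigAnd (l : list form) : form :=
  match l with [] => Top | x :: r => And x (bigAnd r) end.
Fixpoint bigOr (l : list form) : form :=
  match l with [] => Bot | x :: r => Or x (bigOr r) end.

Definition derives (Lam : form -> Prop) (G D : form -> Prop) : Prop :=
  exists (g d : list form),
    (forall x, In x g -> G x) /\ (forall x, In x d -> D x) /\
    Lam (Imp (bigAnd g) (bigOr d)).

Record ptype : Type := mkT { pos : form -> Prop; neg : form -> Prop }.

Definition prime_type (M : modality -> bool) (Lam : form -> Prop) (P : ptype) : Prop :=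
  (forall f, pos P f \/ neg P f <-> inL M f) /\ ~ derives Lam (pos P) (neg P).

Definition le_T (P Q : ptype) : Prop :=
  (forall f, pos P f -> pos Q f) /\ (forall f, neg Q f -> neg P f).

Definition type_conditions (P : ptype) : Prop :=
  (forall f, ~ (neg P f /\ pos P f)) /\
  ~ pos P Bot /\
  (forall a b, pos P (And a b) -> pos P a /\ pos P b) /\
  (forall a b, neg P (And a b) -> neg P a \/ neg P b) /\
  (forall a b, pos P (Or a b) -> pos P a \/ pos P b) /\
  (forall a b, neg P (Or a b) -> neg P a /\ neg P b) /\
  (forall a b, pos P (Imp a b) -> neg P a \/ pos P b) /\
  (forall a b, neg P (Imp a b) -> neg P b) /\
  (forall a, neg P (Dia a) -> neg P a).

Definition sensible (P Q : ptype) : Prop :=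
  (forall a, pos P (Next a) -> pos Q a) /\
  (forall a, neg P (Next a) -> neg Q a) /\
  (forall a, pos P (Dia a) -> pos P a \/ pos Q (Dia a)) /\
  (forall a, neg P (Dia a) -> neg Q (Dia a)) /\
  (forall a, pos P (All a) <-> pos Q (All a)) /\
  (forall a, neg P (All a) <-> neg Q (All a)).

Definition Wc (M : modality -> bool) (Lam : form -> Prop) : Type :=
  { P : ptype | prime_type M Lam P }.

Definition le_c {M Lam} (P Q : Wc M Lam) : Prop := le_T (proj1_sig P) (proj1_sig Q).
Definition S_c {M Lam} (P Q : Wc M Lam) : Prop := sensible (proj1_sig P) (proj1_sig Q).
Definition ell_c {M Lam} (P : Wc M Lam) : ptype := proj1_sig P.

(* Prime types are deductively closed, exhaustive and consistent, which yields the type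
   conditions, and Lindenbaum's construction along an enumeration of all formulas extends
   (Φ⁺ ∪ {a}, {b}) to a prime type whenever a → b ∈ Φ⁻.  For the successor, exhaustiveness
   and disjointness force every sensible Ψ to be ({f | ○f ∈ Φ⁺}, {f | ○f ∈ Φ⁻}).  That
   pair is prime because ○ commutes with derivability (necessitation and N4), with ⊥ (N1)
   and with ∨ (N3); it is sensible because ◇a → a ∨ ○◇a follows from the induction rule
   and ∀a ↔ ○∀a is an axiom. *)

From Stdlib Require Import List Lia Classical FunctionalExtensionality PropExtensionality ProofIrrelevance.
From Stdlib Require Cantor.
Import ListNotations.

(** * Enumerating formulas *)

Fixpoint forms_upto (n : nat) : list form :=
  match n with
  | 0 => []
  | S n =>
      let l := forms_upto n in
      l ++ Bot :: Var n ::
        flat_map (fun p => [And (fst p) (snd p); Or (fst p) (snd p); Imp (fst p) (snd p)])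
          (list_prod l l) ++
        flat_map (fun a => [Next a; Dia a; Box a; All a]) l
  end.

Lemma forms_upto_mono n m : n <= m -> incl (forms_upto n) (forms_upto m).
Proof. induction 1; [apply incl_refl | simpl; eauto using incl_appl]. Qed.

Lemma in_forms_upto_binary n a b f :
  In f [And a b; Or a b; Imp a b] -> In a (forms_upto n) -> In b (forms_upto n) ->
  In f (forms_upto (S n)).
Proof.
  intros Hf Ha Hb; simpl; rewrite !in_app_iff; right; do 2 right.
  rewrite in_app_iff; left; apply in_flat_map; exists (a, b); auto using in_prod.
Qed.

Lemma in_forms_upto_unary n a f :
  In f [Next a; Dia a; Box a; All a] -> In a (forms_upto n) -> In f (forms_upto (S n)).
Proof.
  intros Hf Ha; simpl; rewrite !in_app_iff; right; do 2 right.
  rewrite in_app_iff; right; apply in_flat_map; eauto.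
Qed.

Lemma forms_upto_exhaustive f : exists n, In f (forms_upto n).
Proof.
  induction f as [| v | a [n1 H1] b [n2 H2] | a [n1 H1] b [n2 H2] | a [n1 H1] b [n2 H2]
                 | a [n H] | a [n H] | a [n H] | a [n H]].
  1: exists 1; simpl; auto.
  1: exists (S v); simpl; rewrite in_app_iff; simpl; auto.
  all: try (exists (S (max n1 n2)); apply in_forms_upto_binary with a b;
            [simpl; tauto | eapply forms_upto_mono; [|eassumption]; lia ..]).
  all: exists (S n); apply in_forms_upto_unary with a; [simpl; tauto | assumption].
Qed.

Lemma form_enumerable : exists enum : nat -> form, forall f, exists k, enum k = f.
Proof.
  exists (fun k => let (i, n) := Cantor.of_nat k in nth i (forms_upto n) Bot).
  intro f; destruct (forms_upto_exhaustive f) as [n Hn].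
  destruct (In_nth _ _ Bot Hn) as [i [_ Hi]].
  exists (Cantor.to_nat (i, n)); rewrite Cantor.cancel_of_to; exact Hi.
Qed.

Section Admissible.
Variables (M : modality -> bool) (Lam : form -> Prop).
Hypothesis HLam : admissible M Lam.
Local Notation L := (inL M).

Lemma lam_in_L f : Lam f -> L f.
Proof. apply HLam. Qed.

Lemma lam_mp a b : Lam a -> Lam (Imp a b) -> Lam b.
Proof. apply HLam. Qed.

Lemma lam_next a : Lam a -> Lam (Next a).
Proof. apply HLam. Qed.

Lemma lam_dia_mono a b : M MDia = true -> Lam (Imp a b) -> Lam (Imp (Dia a) (Dia b)).
Proof. intro; apply HLam; assumption. Qed.

Lemma lam_dia_ind a : M MDia = true -> Lam (Imp (Next a) a) -> Lam (Imp (Dia a) a).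
Proof. intro; apply HLam; assumption. Qed.

Lemma lam_ipc a b c t : L a -> L b -> L c -> ipc_axiom a b c t -> Lam t.
Proof. intros; apply HLam; exists a, b, c; auto. Qed.

Ltac pick_disjunct := repeat (first [left; reflexivity | right]); reflexivity.

Ltac ipc_instance a b c :=
  apply (lam_ipc a b c); [assumption || exact I .. | unfold ipc_axiom; pick_disjunct].

Lemma ax_K a b : L a -> L b -> Lam (Imp a (Imp b a)).
Proof. intros; ipc_instance a b Bot. Qed.

Lemma ax_S a b c : L a -> L b -> L c ->
  Lam (Imp (Imp a (Imp b c)) (Imp (Imp a b) (Imp a c))).
Proof. intros; ipc_instance a b c. Qed.

Lemma ax_and_elim_l a b : L a -> L b -> Lam (Imp (And a b) a).
Proof. intros; ipc_instance a b Bot. Qed.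

Lemma ax_and_elim_r a b : L a -> L b -> Lam (Imp (And a b) b).
Proof. intros; ipc_instance a b Bot. Qed.

Lemma ax_and_intro a b : L a -> L b -> Lam (Imp a (Imp b (And a b))).
Proof. intros; ipc_instance a b Bot. Qed.

Lemma ax_or_intro_l a b : L a -> L b -> Lam (Imp a (Or a b)).
Proof. intros; ipc_instance a b Bot. Qed.

Lemma ax_or_intro_r a b : L a -> L b -> Lam (Imp b (Or a b)).
Proof. intros; ipc_instance a b Bot. Qed.

Lemma ax_or_elim a b c : L a -> L b -> L c ->
  Lam (Imp (Imp a c) (Imp (Imp b c) (Imp (Or a b) c))).
Proof. intros; ipc_instance a b c. Qed.

Lemma ax_bot_elim a : L a -> Lam (Imp Bot a).
Proof. intros; ipc_instance a a Bot. Qed.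

Lemma lam_next_axiom a b t : L a -> L b -> next_axiom a b t -> Lam t.
Proof. intros; apply HLam; exists a, b, Bot; simpl; auto 6. Qed.

Ltac next_instance a b := apply (lam_next_axiom a b); [assumption || exact I .. | unfold next_axiom, Neg; pick_disjunct].

Lemma ax_next_bot : Lam (Neg (Next Bot)).
Proof. next_instance Bot Bot. Qed.

Lemma ax_next_or a b : L a -> L b -> Lam (Imp (Next (Or a b)) (Or (Next a) (Next b))).
Proof. intros; next_instance a b. Qed.

Lemma ax_next_imp a b : L a -> L b -> Lam (Imp (Next (Imp a b)) (Imp (Next a) (Next b))).
Proof. intros; next_instance a b. Qed.

Lemma lam_dia_axiom a : M MDia = true -> L a -> Lam (Imp (Or a (Next (Dia a))) (Dia a)).
Proof.
  intros; apply HLam; exists a, a, Bot; do 3 (split; [assumption || exact I |]).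
  right; right; left; split; [assumption | reflexivity].
Qed.

Lemma lam_all_next a : M MAll = true -> L a -> Lam (Iff (All a) (Next (All a))).
Proof.
  intros; apply HLam; exists a, a, Bot; do 3 (split; [assumption || exact I |]).
  do 3 right; split; [assumption |]; unfold all_axiom; auto 7.
Qed.


(** * Derivations from hypotheses *)

Definition extend (G : form -> Prop) (a : form) : form -> Prop := fun f => G f \/ f = a.

(* Hypotheses are required to lie in [L], so every derivable formula does too ([proves_L]);
   this is what lets derivations use the axiom schemes, which are only instantiated in [L]. *)
Inductive proves (G : form -> Prop) : form -> Prop :=
| proves_hyp f : G f -> L f -> proves G f
| proves_lam f : Lam f -> proves G f
| proves_mp a b : proves G a -> proves G (Imp a b) -> proves G b.

Lemma proves_L G f : proves G f -> L f.
Proof. induction 1 as [| f | a b _ _ _ []]; auto using lam_in_L. Qed.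

Lemma proves_subst G G' f :
  (forall x, G x -> L x -> proves G' x) -> proves G f -> proves G' f.
Proof. intro HG; induction 1; eauto using proves_lam, proves_mp. Qed.

Lemma proves_mono G G' f : (forall x, G x -> G' x) -> proves G f -> proves G' f.
Proof. intro HG; apply proves_subst; intros x Hx Lx; apply proves_hyp; auto. Qed.

Lemma proves_lam_mp G a b : Lam (Imp a b) -> proves G a -> proves G b.
Proof. intros; eapply proves_mp; eauto using proves_lam. Qed.

Lemma proves_assumption G a : L a -> proves (extend G a) a.
Proof. apply proves_hyp; now right. Qed.

Lemma proves_weaken G a f : proves G f -> proves (extend G a) f.
Proof. apply proves_mono; now left. Qed.

Lemma proves_finite G f : proves G f ->
  exists g, (forall x, In x g -> G x) /\ proves (fun x => In x g) f.
Proof.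
  induction 1 as [f Hf Lf | f Hf | a b _ [g1 [Hg1 T1]] _ [g2 [Hg2 T2]]].
  - exists [f]; split; [intros x [<- | []]; auto | apply proves_hyp; simpl; auto].
  - exists []; split; [intros _ [] | now apply proves_lam].
  - exists (g1 ++ g2); split; [intros x Hx; apply in_app_iff in Hx as []; auto |].
    apply proves_mp with a; eapply proves_mono; eauto; intros; apply in_app_iff; auto.
Qed.

Lemma deduction G a b : L a -> proves (extend G a) b -> proves G (Imp a b).
Proof.
  intros La; induction 1 as [f [Hf | ->] Lf | f Hf | x y Tx IHx Txy IHxy].
  - apply proves_lam_mp with f; [now apply ax_K | now apply proves_hyp].
  - assert (Laa : L (Imp a a)) by (simpl; auto).
    apply proves_mp with (Imp a (Imp a a)); [apply proves_lam, ax_K; auto |].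
    apply proves_lam_mp with (Imp a (Imp (Imp a a) a));
      [apply ax_S; auto | apply proves_lam, ax_K; auto].
  - apply proves_lam_mp with f; [apply ax_K; auto using lam_in_L | now apply proves_lam].
  - pose proof (proves_L _ _ Txy) as [Lx Ly].
    apply proves_mp with (Imp a x); auto.
    apply proves_lam_mp with (Imp a (Imp x y)); auto.
    apply ax_S; auto.
Qed.

Lemma proves_empty f : proves (fun _ => False) f -> Lam f.
Proof. induction 1 as [f [] | | a b _ IHa _ IHab]; eauto using lam_mp. Qed.

Lemma lam_imp_of_proves a b : L a -> proves (extend (fun _ => False) a) b -> Lam (Imp a b).
Proof. intros; apply proves_empty, deduction; auto. Qed.

Lemma proves_and_intro G a b : proves G a -> proves G b -> proves G (And a b).
Proof.
  intros Ta Tb; apply proves_mp with b; auto.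
  apply proves_lam_mp with a; auto; apply ax_and_intro; eauto using proves_L.
Qed.

Lemma proves_and_elim_l G a b : proves G (And a b) -> proves G a.
Proof.
  intro T; destruct (proves_L _ _ T); apply proves_lam_mp with (And a b); auto using ax_and_elim_l.
Qed.

Lemma proves_and_elim_r G a b : proves G (And a b) -> proves G b.
Proof.
  intro T; destruct (proves_L _ _ T); apply proves_lam_mp with (And a b); auto using ax_and_elim_r.
Qed.

Lemma proves_or_intro_l G a b : L b -> proves G a -> proves G (Or a b).
Proof. intros Lb T; eapply proves_lam_mp; eauto using ax_or_intro_l, proves_L. Qed.

Lemma proves_or_intro_r G a b : L a -> proves G b -> proves G (Or a b).
Proof. intros La T; eapply proves_lam_mp; eauto using ax_or_intro_r, proves_L. Qed.

Lemma proves_or_elim G a b c :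
  proves G (Or a b) -> proves (extend G a) c -> proves (extend G b) c -> proves G c.
Proof.
  intros T Ta Tb; destruct (proves_L _ _ T) as [La Lb].
  apply proves_mp with (Or a b); auto.
  apply proves_mp with (Imp b c); [now apply deduction |].
  apply proves_mp with (Imp a c); [now apply deduction |].
  apply proves_lam, ax_or_elim; eauto using proves_L.
Qed.

Lemma proves_bot_elim G c : L c -> proves G Bot -> proves G c.
Proof. intros; eapply proves_lam_mp; eauto using ax_bot_elim. Qed.

Lemma bigOr_L d : L (bigOr d) <-> forall x, In x d -> L x.
Proof.
  induction d as [| a d IH]; simpl; [split; [intros _ _ [] | auto] |].
  rewrite IH; split; [intros [] x [<- | Hx]; auto | auto].
Qed.

Lemma proves_bigAnd G g : (forall x, In x g -> proves G x) -> proves G (bigAnd g).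
Proof.
  induction g as [| a g IH]; intro Hg; simpl.
  - apply proves_lam, ax_bot_elim; exact I.
  - apply proves_and_intro; auto using in_eq, in_cons.
Qed.

Lemma proves_bigAnd_elim G g x : proves G (bigAnd g) -> In x g -> proves G x.
Proof.
  induction g as [| a g IH]; intros T Hx; [destruct Hx |].
  destruct Hx as [<- | Hx].
  - eapply proves_and_elim_l; eauto.
  - apply IH; [eapply proves_and_elim_r; eauto | auto].
Qed.

Lemma proves_bigOr_intro G d x : L (bigOr d) -> In x d -> proves G x -> proves G (bigOr d).
Proof.
  induction d as [| a d IH]; intros Ld Hx T; [destruct Hx |].
  simpl in Ld |- *; destruct Ld, Hx as [<- | Hx].
  - now apply proves_or_intro_l.
  - apply proves_or_intro_r; auto.
Qed.

Lemma proves_bigOr_elim G d c : L c -> proves G (bigOr d) ->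
  (forall x, In x d -> proves (extend G x) c) -> proves G c.
Proof.
  intro Lc; revert G; induction d as [| a d IH]; intros G T Hd; simpl in T.
  - now apply proves_bot_elim.
  - apply proves_or_elim with a (bigOr d); auto using in_eq.
    apply IH; [apply proves_assumption; apply (proves_L _ _ T) |].
    intros x Hx; apply proves_mono with (extend G x); [intros y [Hy | ->]; [left; left | right]; auto |].
    auto using in_cons.
Qed.

Lemma proves_bigOr_incl G d d' :
  incl d d' -> L (bigOr d') -> proves G (bigOr d) -> proves G (bigOr d').
Proof.
  intros Hdd' Ld' T; apply proves_bigOr_elim with d; auto.
  intros x Hx; apply proves_bigOr_intro with x; auto.
  apply proves_assumption, (bigOr_L d'); auto.
Qed.

Lemma form_eq_dec (f g : form) : {f = g} + {f <> g}.
Proof. do 2 decide equality. Defined.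

Definition entails (G D : form -> Prop) : Prop :=
  exists d, (forall x, In x d -> D x) /\ proves G (bigOr d).

Lemma derives_entails G D : (forall f, G f -> L f) -> derives Lam G D -> entails G D.
Proof.
  intros HG (g & d & Hg & Hd & H); exists d; split; auto.
  apply proves_lam_mp with (bigAnd g); auto.
  apply proves_bigAnd; intros x Hx; apply proves_hyp; auto.
Qed.

Lemma entails_derives G D : (forall f, G f -> L f) -> entails G D -> derives Lam G D.
Proof.
  intros HG (d & Hd & T); destruct (proves_finite _ _ T) as (g & Hg & Tg).
  exists g, d; split; [| split]; auto.
  assert (Lg : L (bigAnd g)).
  { apply proves_L with G, proves_bigAnd; intros x Hx; apply proves_hyp; auto. }
  apply lam_imp_of_proves; auto.
  apply proves_subst with (fun x => In x g); auto; intros x Hx _.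
  apply proves_bigAnd_elim with g; auto; now apply proves_assumption.
Qed.

Lemma entails_mono G D G' D' : (forall f, G f -> G' f) -> (forall f, D f -> D' f) ->
  entails G D -> entails G' D'.
Proof. intros HG HD (d & Hd & T); exists d; split; eauto using proves_mono. Qed.

Lemma entails_cut G D e : L e ->
  entails (extend G e) D -> entails G (extend D e) -> entails G D.
Proof.
  intros Le (d1 & Hd1 & T1) (d2 & Hd2 & T2).
  set (d2' := remove form_eq_dec e d2).
  assert (Ld1 : forall x, In x d1 -> L x) by exact (proj1 (bigOr_L d1) (proves_L _ _ T1)).
  assert (Ld2 : forall x, In x d2 -> L x) by exact (proj1 (bigOr_L d2) (proves_L _ _ T2)).
  assert (L12 : L (bigOr (d1 ++ d2'))).
  { apply bigOr_L; intros x Hx; apply in_app_iff in Hx as [Hx | Hx]; auto.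
    apply in_remove in Hx as [Hx _]; auto. }
  exists (d1 ++ d2'); split.
  - intros x Hx; apply in_app_iff in Hx as [Hx | Hx]; auto.
    apply in_remove in Hx as [Hx Hne]; destruct (Hd2 x Hx); [auto | contradiction].
  - apply proves_bigOr_elim with d2; auto; intros x Hx.
    destruct (form_eq_dec x e) as [-> | Hne].
    + apply proves_bigOr_incl with d1; auto using incl_appl, incl_refl.
    + apply proves_bigOr_intro with x; auto using proves_assumption.
      apply in_or_app; right; now apply in_in_remove.
Qed.

(** * Prime types *)

Lemma le_T_refl P : le_T P P.
Proof. split; auto. Qed.

Lemma le_T_trans P Q R : le_T P Q -> le_T Q R -> le_T P R.
Proof. intros [] []; split; auto. Qed.

Lemma le_T_antisym P Q : le_T P Q -> le_T Q P -> P = Q.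
Proof.
  destruct P as [p n], Q as [p' n']; intros [Hp Hn] [Hp' Hn']; simpl in *.
  f_equal; apply functional_extensionality; intro;
    apply propositional_extensionality; split; auto.
Qed.

Section PrimeType.
Variable P : ptype.
Hypothesis HP : prime_type M Lam P.

Lemma prime_pos_L f : pos P f -> L f.
Proof. intro; apply HP; auto. Qed.

Lemma prime_neg_L f : neg P f -> L f.
Proof. intro; apply HP; auto. Qed.

Lemma prime_pos_or_neg f : L f -> pos P f \/ neg P f.
Proof. apply HP. Qed.

Lemma prime_not_entails : ~ entails (pos P) (neg P).
Proof. intro H; apply HP, entails_derives; auto using prime_pos_L. Qed.

Lemma prime_proves_not_neg f : proves (pos P) f -> ~ neg P f.
Proof.
  intros T Hf; apply prime_not_entails; exists [f]; split; [intros x [<- | []]; auto |].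
  apply proves_bigOr_intro with f; simpl; auto; split; [exact (proves_L _ _ T) | exact I].
Qed.

Lemma prime_pos_closed f : proves (pos P) f -> pos P f.
Proof.
  intro T; destruct (prime_pos_or_neg f (proves_L _ _ T)); auto.
  exfalso; eapply prime_proves_not_neg; eauto.
Qed.

Lemma prime_disjoint f : pos P f -> neg P f -> False.
Proof. intros Hp; apply prime_proves_not_neg, proves_hyp; auto using prime_pos_L. Qed.

Lemma prime_pos_hyp f : pos P f -> proves (pos P) f.
Proof. intro; apply proves_hyp; auto using prime_pos_L. Qed.

Lemma prime_neg_of_not_pos f : L f -> ~ pos P f -> neg P f.
Proof. intros Lf Hf; destruct (prime_pos_or_neg f Lf); tauto. Qed.

Lemma prime_pos_Or a b : pos P (Or a b) -> pos P a \/ pos P b.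
Proof.
  intro H; destruct (prime_pos_L _ H) as [La Lb].
  destruct (prime_pos_or_neg a La), (prime_pos_or_neg b Lb); auto.
  exfalso; apply prime_not_entails; exists [a; b]; split; [intros x [<- | [<- | []]]; auto |].
  assert (Lab : L (bigOr [a; b])) by (simpl; auto).
  apply proves_or_elim with a b; [now apply prime_pos_hyp | |].
  - apply proves_bigOr_intro with a; simpl; auto using proves_assumption.
  - apply proves_bigOr_intro with b; simpl; auto using proves_assumption.
Qed.

Lemma prime_type_conditions : type_conditions P.
Proof.
  unfold type_conditions; repeat match goal with |- _ /\ _ => split end.
  - intros f [Hn Hp]; eauto using prime_disjoint.
  - intro H; apply prime_not_entails; exists []; split; [intros _ [] | now apply prime_pos_hyp].
  - intros a b H; split.
    + apply prime_pos_closed, proves_and_elim_l with b, prime_pos_hyp; auto.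
    + apply prime_pos_closed, proves_and_elim_r with a, prime_pos_hyp; auto.
  - intros a b H; destruct (prime_neg_L _ H) as [La Lb].
    destruct (prime_pos_or_neg a La) as [Ha |]; auto.
    destruct (prime_pos_or_neg b Lb) as [Hb |]; auto.
    exfalso; apply (prime_disjoint (And a b)); auto.
    apply prime_pos_closed, proves_and_intro; auto using prime_pos_hyp.
  - apply prime_pos_Or.
  - intros a b H; destruct (prime_neg_L _ H) as [La Lb].
    split; apply prime_neg_of_not_pos; auto; intro Hp;
      apply (prime_disjoint (Or a b)); auto; apply prime_pos_closed.
    + apply proves_or_intro_l; auto using prime_pos_hyp.
    + apply proves_or_intro_r; auto using prime_pos_hyp.
  - intros a b H; destruct (prime_pos_L _ H) as [La Lb].
    destruct (prime_pos_or_neg a La) as [Ha |]; auto; right.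
    apply prime_pos_closed, proves_mp with a; auto using prime_pos_hyp.
  - intros a b H; destruct (prime_neg_L _ H) as [La Lb].
    apply prime_neg_of_not_pos; auto; intro Hb; apply (prime_disjoint (Imp a b)); auto.
    apply prime_pos_closed, deduction, proves_weaken, prime_pos_hyp; auto.
  - intros a H; destruct (prime_neg_L _ H) as [HD La].
    apply prime_neg_of_not_pos; auto; intro Ha; apply (prime_disjoint (Dia a)); auto.
    apply prime_pos_closed, proves_lam_mp with (Or a (Next (Dia a))); [now apply lam_dia_axiom |].
    apply proves_or_intro_l; [simpl; auto | now apply prime_pos_hyp].
Qed.

End PrimeType.

Lemma prime_le_T P Q : prime_type M Lam P -> prime_type M Lam Q ->
  (forall f, pos P f -> pos Q f) -> le_T P Q.
Proof.
  intros HP HQ H; split; auto; intros f Hf.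
  apply (prime_neg_of_not_pos P HP); [exact (prime_neg_L Q HQ _ Hf) |].
  intro Hp; exact (prime_disjoint Q HQ f (H f Hp) Hf).
Qed.

(** * Lindenbaum's lemma *)

Lemma bound_for_list {A : Type} (F : nat -> A -> Prop) (l : list A) :
  (forall n m x, n <= m -> F n x -> F m x) -> (forall x, In x l -> exists n, F n x) ->
  exists N, forall x, In x l -> F N x.
Proof.
  intros HF; induction l as [| a l IH]; intro Hl; [exists 0; intros _ []|].
  destruct (Hl a (in_eq a l)) as [n Hn], IH as [N HN]; [intros; apply Hl; now right|].
  exists (max n N); intros x [<- | Hx]; [apply HF with n | apply HF with N]; auto; lia.
Qed.

Section Lindenbaum.
Variable enum : nat -> form.
Hypothesis enum_surj : forall f, exists k, enum k = f.
Variables G0 D0 : form -> Prop.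
Hypothesis G0_L : forall f, G0 f -> L f.
Hypothesis D0_L : forall f, D0 f -> L f.
Hypothesis G0_D0 : ~ entails G0 D0.

Fixpoint stage (n : nat) : ptype :=
  match n with
  | 0 => mkT G0 D0
  | S n =>
      let P := stage n in
      let e := enum n in
      mkT (fun f => pos P f \/ (f = e /\ L e /\ ~ entails (extend (pos P) e) (neg P)))
          (fun f => neg P f \/ (f = e /\ L e /\ entails (extend (pos P) e) (neg P)))
  end.

Lemma stage_L n : (forall f, pos (stage n) f -> L f) /\ (forall f, neg (stage n) f -> L f).
Proof.
  induction n as [| n [IHp IHn]]; simpl; [auto |].
  split; intros f [Hf | (-> & Le & _)]; auto.
Qed.

Lemma stage_mono n m : n <= m ->
  (forall f, pos (stage n) f -> pos (stage m) f) /\ (forall f, neg (stage n) f -> neg (stage m) f).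
Proof. induction 1 as [| m _ [IHp IHn]]; simpl; auto. Qed.

Lemma stage_consistent n : ~ entails (pos (stage n)) (neg (stage n)).
Proof.
  induction n as [| n IH]; [exact G0_D0 |]; simpl; intro H.
  set (P := stage n) in *; set (e := enum n) in *.
  destruct (classic (L e)) as [Le | NLe].
  2: { apply IH; revert H; apply entails_mono; intros f [Hf | (_ & Le & _)]; tauto. }
  destruct (classic (entails (extend (pos P) e) (neg P))) as [He | NHe].
  - apply IH, entails_cut with e; auto.
    revert H; apply entails_mono; intros f [Hf | (-> & _ & C)]; unfold extend; tauto.
  - apply NHe; revert H; apply entails_mono; intros f [Hf | (-> & _ & C)]; unfold extend; tauto.
Qed.

Definition limit : ptype :=
  mkT (fun f => exists n, pos (stage n) f) (fun f => exists n, neg (stage n) f).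

Lemma limit_consistent : ~ entails (pos limit) (neg limit).
Proof.
  intros (d & Hd & T); destruct (proves_finite _ _ T) as (g & Hg & Tg).
  destruct (bound_for_list (fun n f => pos (stage n) f) g) as [N1 HN1]; auto.
  { intros n m f Hnm; apply (stage_mono n m Hnm). }
  destruct (bound_for_list (fun n f => neg (stage n) f) d) as [N2 HN2]; auto.
  { intros n m f Hnm; apply (stage_mono n m Hnm). }
  apply (stage_consistent (max N1 N2)); exists d; split.
  - intros x Hx; apply (stage_mono N2); auto; lia.
  - apply proves_mono with (fun x => In x g); auto.
    intros x Hx; apply (stage_mono N1); auto; lia.
Qed.

Lemma limit_prime : prime_type M Lam limit.
Proof.
  split.
  - intro f; split.
    + intros [[n Hn] | [n Hn]]; [apply (proj1 (stage_L n)) | apply (proj2 (stage_L n))]; auto.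
    + intro Lf; destruct (enum_surj f) as [n <-].
      destruct (classic (entails (extend (pos (stage n)) (enum n)) (neg (stage n)))).
      * right; exists (S n); simpl; auto.
      * left; exists (S n); simpl; auto.
  - intro H; apply limit_consistent, derives_entails; auto.
    intros f [n Hn]; apply (proj1 (stage_L n)); auto.
Qed.

End Lindenbaum.

Lemma lindenbaum G D : (forall f, G f -> L f) -> (forall f, D f -> L f) -> ~ entails G D ->
  exists Q, prime_type M Lam Q /\ (forall f, G f -> pos Q f) /\ (forall f, D f -> neg Q f).
Proof.
  intros HG HD HGD; destruct form_enumerable as [enum Henum].
  exists (limit enum G D); split; [now apply limit_prime |].
  split; intros f Hf; exists 0; exact Hf.
Qed.

Lemma prime_witness_Imp P a b : prime_type M Lam P -> neg P (Imp a b) ->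
  exists Q, prime_type M Lam Q /\ le_T P Q /\ pos Q a /\ neg Q b.
Proof.
  intros HP H; destruct (prime_neg_L P HP _ H) as [La Lb].
  destruct (lindenbaum (extend (pos P) a) (fun f => f = b)) as (Q & HQ & HPQ & HbQ).
  - intros f [Hf | ->]; eauto using prime_pos_L.
  - intros f ->; auto.
  - intros (d & Hd & T); apply (prime_disjoint P HP (Imp a b)); auto.
    apply prime_pos_closed, deduction; auto.
    apply proves_bigOr_elim with d; auto.
    intros x Hx; rewrite (Hd x Hx); now apply proves_assumption.
  - exists Q; split; [| split; [| split]]; auto.
    + apply prime_le_T; auto; intros f Hf; apply HPQ; now left.
    + apply HPQ; now right.
Qed.

(** * The successor of a prime type *)

Definition next_type (P : ptype) : ptype :=
  mkT (fun a => pos P (Next a)) (fun a => neg P (Next a)).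

Lemma proves_next G H f : (forall x, G x -> H (Next x)) -> proves G f -> proves H (Next f).
Proof.
  intro GH; induction 1 as [f Hf Lf | f Hf | a b _ IHa _ IHab].
  - apply proves_hyp; auto.
  - apply proves_lam, lam_next; auto.
  - destruct (proves_L _ _ IHab) as [La Lb].
    apply proves_mp with (Next a); auto.
    apply proves_lam_mp with (Next (Imp a b)); auto using ax_next_imp.
Qed.

Lemma proves_next_bigOr G d : proves G (Next (bigOr d)) -> proves G (bigOr (map Next d)).
Proof.
  revert G; induction d as [| a d IH]; intros G T; simpl in *.
  - apply proves_lam_mp with (Next Bot); [exact ax_next_bot | exact T].
  - destruct (proves_L _ _ T) as [La Ld].
    assert (Lmap : L (bigOr (map Next d))).
    { apply bigOr_L; intros x Hx; apply in_map_iff in Hx as (y & <- & Hy).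
      exact (proj1 (bigOr_L d) Ld y Hy). }
    apply proves_or_elim with (Next a) (Next (bigOr d)).
    + apply proves_lam_mp with (Next (Or a (bigOr d))); auto using ax_next_or.
    + apply proves_or_intro_l; auto; now apply proves_assumption.
    + apply proves_or_intro_r; [exact La | apply IH; now apply proves_assumption].
Qed.

Lemma next_type_prime P : prime_type M Lam P -> prime_type M Lam (next_type P).
Proof.
  intro HP; split; [intro f; exact (proj1 HP (Next f)) |].
  intro H; apply (prime_not_entails P HP).
  apply derives_entails in H as (d & Hd & T); [| intros f Hf; exact (prime_pos_L P HP _ Hf)].
  exists (map Next d); split.
  - intros x Hx; apply in_map_iff in Hx as (y & <- & Hy); exact (Hd y Hy).
  - apply proves_next_bigOr, proves_next with (pos (next_type P)); auto.
Qed.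

Lemma lam_next_mono a b : Lam (Imp a b) -> Lam (Imp (Next a) (Next b)).
Proof.
  intro H; destruct (lam_in_L _ H).
  apply lam_mp with (Next (Imp a b)); [now apply lam_next | now apply ax_next_imp].
Qed.

(* [u := a ∨ ○◇a] satisfies [○u → u], so the induction rule gives [◇u → u]. *)
Lemma dia_unfold a : M MDia = true -> L a -> Lam (Imp (Dia a) (Or a (Next (Dia a)))).
Proof.
  intros HD La; set (u := Or a (Next (Dia a))).
  assert (Lu : L u) by (simpl; auto).
  assert (a_dia : Lam (Imp a (Dia a))).
  { apply lam_imp_of_proves; auto; apply proves_lam_mp with u; [now apply lam_dia_axiom |].
    apply proves_or_intro_l; [simpl; auto | now apply proves_assumption]. }
  assert (next_dia_dia : Lam (Imp (Next (Dia a)) (Dia a))).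
  { apply lam_imp_of_proves; [simpl; auto |]; apply proves_lam_mp with u; [now apply lam_dia_axiom |].
    apply proves_or_intro_r; [exact La | apply proves_assumption; simpl; auto]. }
  assert (u_ind : Lam (Imp (Next u) u)).
  { apply lam_imp_of_proves; [exact Lu |].
    apply proves_or_elim with (Next a) (Next (Next (Dia a))).
    - apply proves_lam_mp with (Next u); [apply ax_next_or; simpl; auto | now apply proves_assumption].
    - apply proves_or_intro_r; [exact La |].
      apply proves_lam_mp with (Next a); [now apply lam_next_mono | now apply proves_assumption].
    - apply proves_or_intro_r; [exact La |].
      apply proves_lam_mp with (Next (Next (Dia a))); [now apply lam_next_mono |].
      apply proves_assumption; simpl; auto. }
  apply lam_imp_of_proves; [simpl; auto |].
  apply proves_lam_mp with (Dia u); [now apply lam_dia_ind |].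
  apply proves_lam_mp with (Dia a); [apply lam_dia_mono, ax_or_intro_l; simpl; auto |].
  apply proves_assumption; simpl; auto.
Qed.

Lemma prime_pos_All_iff_next P a : prime_type M Lam P ->
  pos P (All a) <-> pos P (Next (All a)).
Proof.
  intro HP; split; intro H; destruct (prime_pos_L P HP _ H) as [HA La];
    pose proof (lam_all_next a HA La) as Hiff; apply (prime_pos_closed P HP).
  - apply proves_mp with (All a); [now apply prime_pos_hyp |].
    apply proves_and_elim_l with (Imp (Next (All a)) (All a)), proves_lam, Hiff.
  - apply proves_mp with (Next (All a)); [now apply prime_pos_hyp |].
    apply proves_and_elim_r with (Imp (All a) (Next (All a))), proves_lam, Hiff.
Qed.

Lemma next_type_sensible P : prime_type M Lam P -> sensible P (next_type P).
Proof.
  intro HP; unfold sensible; simpl; repeat match goal with |- _ /\ _ => split end; auto.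
  - intros a H; destruct (prime_pos_L P HP _ H) as [HD La].
    apply (prime_pos_Or P HP), (prime_pos_closed P HP), proves_lam_mp with (Dia a);
      [now apply dia_unfold | now apply prime_pos_hyp].
  - intros a H; destruct (prime_neg_L P HP _ H) as [HD La].
    apply (prime_neg_of_not_pos P HP); [simpl; auto |]; intro Hn.
    apply (prime_disjoint P HP (Dia a)); auto.
    apply (prime_pos_closed P HP), proves_lam_mp with (Or a (Next (Dia a)));
      [now apply lam_dia_axiom |].
    apply proves_or_intro_r; [exact La | now apply prime_pos_hyp].
  - intro a; now apply prime_pos_All_iff_next.
  - intro a; pose proof (prime_pos_All_iff_next P a HP) as E.
    split; intro H; apply (prime_neg_of_not_pos P HP); try exact (prime_neg_L P HP _ H);
      intro Hp.
    + exact (prime_disjoint P HP _ (proj2 E Hp) H).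
    + exact (prime_disjoint P HP _ (proj1 E Hp) H).
Qed.

Lemma sensible_next_type P Q : prime_type M Lam P -> prime_type M Lam Q ->
  sensible P Q -> Q = next_type P.
Proof.
  intros HP HQ (Hpos & Hneg & _).
  apply le_T_antisym; apply prime_le_T; auto using next_type_prime.
  intros f Hf; destruct (prime_pos_or_neg P HP (Next f)) as [| Hn]; auto.
  - exact (prime_pos_L Q HQ _ Hf).
  - exfalso; apply (prime_disjoint Q HQ f); auto.
Qed.

End Admissible.

Lemma next_type_mono P Q : le_T P Q -> le_T (next_type P) (next_type Q).
Proof. intros [Hp Hn]; split; simpl; auto. Qed.

Lemma Wc_eq M Lam (P Q : Wc M Lam) : ell_c P = ell_c Q -> P = Q.
Proof. destruct P as [P HP], Q as [Q HQ]; simpl; intros <-; f_equal; apply proof_irrelevance. Qed.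

Definition succ_c M Lam (HLam : admissible M Lam) (P : Wc M Lam) : Wc M Lam :=
  exist _ (next_type (ell_c P)) (next_type_prime M Lam HLam _ (proj2_sig P)).

Theorem proposition5p6 (M : modality -> bool) (Lam : form -> Prop)
  (HLam : admissible M Lam) :
  (* <=_c is a partial order on W_c *)
  ((forall P : Wc M Lam, le_c P P) /\
   (forall P Q R : Wc M Lam, le_c P Q -> le_c Q R -> le_c P R) /\
   (forall P Q : Wc M Lam, le_c P Q -> le_c Q P -> P = Q)) /\
  (* each label satisfies the type conditions *)
  (forall P : Wc M Lam, type_conditions (ell_c P)) /\
  (* labels are monotone *)
  (forall P Q : Wc M Lam, le_c P Q -> le_T (ell_c P) (ell_c Q)) /\
  (* witnesses for refuted implications *)
  (forall (P : Wc M Lam) a b, neg (ell_c P) (Imp a b) ->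
     exists Q : Wc M Lam, le_c P Q /\ pos (ell_c Q) a /\ neg (ell_c Q) b) /\
  (* S_c is (the graph of) a monotone function W_c -> W_c with sensible pairs *)
  (exists s : Wc M Lam -> Wc M Lam,
     (forall P Q : Wc M Lam, S_c P Q <-> Q = s P) /\
     (forall P Q : Wc M Lam, le_c P Q -> le_c (s P) (s Q)) /\
     (forall P : Wc M Lam, sensible (ell_c P) (ell_c (s P)))).
Proof.
  split; [split; [| split] |].
  - intro P; apply le_T_refl.
  - intros P Q R; apply le_T_trans.
  - intros P Q HPQ HQP; apply Wc_eq, le_T_antisym; assumption.
  - split; [intros [P HP]; exact (prime_type_conditions M Lam HLam P HP) |].
    split; [auto |]; split.
    + intros [P HP] a b H.
      destruct (prime_witness_Imp M Lam HLam P a b HP H) as (Q & HQ & HPQ & Ha & Hb).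
      now exists (exist _ Q HQ).
    + exists (succ_c M Lam HLam); split; [| split].
      * intros [P HP] [Q HQ]; unfold S_c; simpl; split.
        -- intro H; apply Wc_eq; simpl; now apply (sensible_next_type M Lam HLam).
        -- intro E; injection E as ->; now apply (next_type_sensible M Lam HLam).
      * intros P Q; apply next_type_mono.
      * intros [P HP]; now apply (next_type_sensible M Lam HLam).
Qed.
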